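(* Fix $p\in(0,1)$ and $\lambda\in\mathbb{R}$. For any fixed $T>0$ and $a\in(0,\frac{p}{1+p})$ there exist $b_{T,a}>0$ and $C_{T,a}>0$ such that for all $b\ge b_{T,a}$ and all $t\in[ap\log b,T+ap\log b]$: if $p\in(0,\frac12)$, then $$|\gamma_h(t)|\le C_{T,a}\left[(|\lambda|b^{-2p(1-a)}+b^{-4p(1-a)})e^{-t/p}+(|\lambda|b^{-2p}+b^{-4p})e^{t/p}\right];$$ if $p\in[\frac12,1)$, then $$|\gamma_h(t)|\le C_{T,a}\left[(|\lambda|b^{-2p(1-a)}+b^{-4p(1-a)})e^{-t/p}+(|\lambda|b^{-2p}+b^{-4p(1-a)})e^{t/p}\right].$$ The same bounds hold for $\gamma_h'(t)$.
   Context: Let $\Theta_h(t)=\dfrac{e^{t/p}}{(1+\alpha_pe^{2t})^{1/p}}$ with $\alpha_p=\frac{p^2}{4(1+p)}$. Let $\Sigma$ be a solution of the linear equation $\Sigma''-\frac{1}{p^2}\Sigma+(2p+1)\Theta_h^{2p}\Sigma=0$ normalized by the Wronskian relation $\Theta_h'(t)\Sigma'(t)-\Theta_h''(t)\Sigma(t)=1$ for all $t$ (the expression below does not depend on which such $\Sigma$ is chosen). Let $f_b(t)=-\lambda b^{-2p}e^{2t}+b^{-4p}e^{4t}$ and define $$\gamma_h(t)=\Sigma(t)\int_{-\infty}^t f_b(t')\Theta_h'(t')\Theta_h(t')\,dt'-\Theta_h'(t)\int_{-\infty}^t f_b(t')\Sigma(t')\Theta_h(t')\,dt'.$$ *)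

From Stdlib Require Import Reals Lra.
From Coquelicot Require Import Coquelicot.
Open Scope R_scope.

Definition alpha_p (p : R) : R := p ^ 2 / (4 * (1 + p)).

Definition Theta_h (p : R) (t : R) : R :=
  exp (t / p) / Rpower (1 + alpha_p p * exp (2 * t)) (1 / p).

Definition f_b (p lam b : R) (t : R) : R :=
  - lam * Rpower b (-2 * p) * exp (2 * t) + Rpower b (-4 * p) * exp (4 * t).

Definition int_from_minfty (g : R -> R) (t : R) : R :=
  RInt_gen g (Rbar_locally m_infty) (at_point t).

Definition gamma_h (p lam b : R) (Sigma : R -> R) (t : R) : R :=
  Sigma t * int_from_minfty (fun s => f_b p lam b s * Derive (Theta_h p) s * Theta_h p s) t
  - Derive (Theta_h p) t * int_from_minfty (fun s => f_b p lam b s * Sigma s * Theta_h p s) t.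

Definition is_Sigma (p : R) (Sigma : R -> R) : Prop :=
  (forall t, ex_derive Sigma t) /\
  (forall t, ex_derive (Derive Sigma) t) /\
  (forall t, Derive_n Sigma 2 t - / p ^ 2 * Sigma t
             + (2 * p + 1) * Rpower (Theta_h p t) (2 * p) * Sigma t = 0) /\
  (forall t, Derive (Theta_h p) t * Derive Sigma t
             - Derive_n (Theta_h p) 2 t * Sigma t = 1).

Definition bound_small (p lam b t a : R) : R :=
  (Rabs lam * Rpower b (-2 * p * (1 - a)) + Rpower b (-4 * p * (1 - a))) * exp (- t / p)
  + (Rabs lam * Rpower b (-2 * p) + Rpower b (-4 * p)) * exp (t / p).

Definition bound_large (p lam b t a : R) : R :=
  (Rabs lam * Rpower b (-2 * p * (1 - a)) + Rpower b (-4 * p * (1 - a))) * exp (- t / p)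
  + (Rabs lam * Rpower b (-2 * p) + Rpower b (-4 * p * (1 - a))) * exp (t / p).

From Stdlib Require Import Reals Lra Psatz.
From Coquelicot Require Import Coquelicot.
Open Scope R_scope.

(* Write Theta = Theta_h.  From the closed form Theta = exp(t/p) (1 + alpha e^{2t})^{-1/p}
   we get Theta' = Theta psi and Theta'' = Theta (psi^2 + psi') with |psi|, |psi'| <= 1/p,
   Theta <= min(e^{t/p}, A e^{-t/p}), and |Theta'| >= c e^{-|t|/p} outside a compact
   interval.  The Wronskian identity says (Sigma / Theta')' = 1 / Theta'^2 wherever
   Theta' <> 0; integrating this on the two tails and using compactness in the middle
   gives |Sigma|, |Sigma'| <= S (e^{t/p} + e^{-t/p}).

   Next, the integrands g1 = f_b Theta' Theta and g2 = f_b Sigma Theta are O(e^{2s}) at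
   -oo, so the improper integrals J1, J2 exist, split as L + int_0^t, and differentiate
   to g1, g2.  Since Sigma g1 = Theta' g2 the product rule gives
   gamma_h = Sigma J1 - Theta' J2 and gamma_h' = Sigma' J1 - Theta'' J2.
   Bounding J1, J2 for t >= 0 by explicit exponential integrals, and then using
   t <= T + a p log b to trade e^{kt} b^{-kp} for e^{4T} b^{-kp(1-a)}, yields the two
   estimates with b0 = 1 and a constant C depending only on p, T and Sigma. *)

Lemma exp_le_mono x y : x <= y -> exp x <= exp y.
Proof. intros [H|H]; [left; apply exp_increasing; exact H | subst; lra]. Qed.

Lemma exp_mul_exp_opp x : exp x * exp (- x) = 1.
Proof. rewrite <- exp_plus, Rplus_opp_r; apply exp_0. Qed.

Lemma exp_double x : exp (2 * x) = exp x ^ 2.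
Proof. replace (2 * x) with (x + x) by ring; rewrite exp_plus; ring. Qed.

Lemma exp_ge_1 x : 0 <= x -> 1 <= exp x.
Proof. intros Hx; rewrite <- exp_0; apply exp_le_mono; exact Hx. Qed.

Lemma Rpower_pos b x : 0 < Rpower b x.
Proof. apply exp_pos. Qed.

Lemma Rabs_div_le n d m : 0 < d -> Rabs n <= m * d -> Rabs (n / d) <= m.
Proof.
  intros Hd H. rewrite Rabs_div, (Rabs_pos_eq d) by lra.
  apply Rmult_le_reg_r with d; [exact Hd|]. unfold Rdiv. rewrite Rmult_assoc, Rinv_l; lra.
Qed.

Lemma nondecreasing_of_derive f df a b : a <= b ->
  (forall x, a <= x <= b -> is_derive f x (df x)) ->
  (forall x, a <= x <= b -> 0 <= df x) -> f a <= f b.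
Proof.
  intros Hab Hd Hpos.
  destruct (MVT_gen f a b df) as [c [Hc Heq]];
    rewrite ?Rmin_left, ?Rmax_right in * by lra.
  - intros x Hx; apply Hd; lra.
  - intros x Hx. apply continuity_pt_filterlim,
      (ex_derive_continuous (K := R_AbsRing) (V := R_NormedModule)).
    exists (df x); apply Hd; lra.
  - assert (0 <= df c * (b - a)) by (apply Rmult_le_pos; [apply Hpos|]; lra). lra.
Qed.

Lemma growth_right h dh t0 K k : 0 < k ->
  (forall x, t0 <= x -> is_derive h x (dh x)) ->
  (forall x, t0 <= x -> 0 <= dh x <= K * exp (k * x)) ->
  forall t, t0 <= t -> Rabs (h t) <= Rabs (h t0) + K / k * exp (k * t).
Proof.
  intros Hk Hd Hdh t Ht.
  assert (Hlow : h t0 <= h t).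
  { apply (nondecreasing_of_derive h dh); [lra | |]; intros x Hx; apply Hd || apply Hdh; lra. }
  assert (Hup : K / k * exp (k * t0) - h t0 <= K / k * exp (k * t) - h t).
  { apply (nondecreasing_of_derive (fun x => K / k * exp (k * x) - h x)
      (fun x => K * exp (k * x) - dh x)); [lra | |].
    - intros x Hx. apply (is_derive_minus (fun x => K / k * exp (k * x)) h).
      + auto_derive; [auto | field; lra].
      + apply Hd; lra.
    - intros x Hx; specialize (Hdh x (proj1 Hx)); lra. }
  assert (0 <= K) by (specialize (Hdh t0 (Rle_refl _)); pose proof (exp_pos (k * t0)); nra).
  assert (0 <= K / k * exp (k * t0))
    by (apply Rmult_le_pos; [apply Rmult_le_pos; [|left; apply Rinv_0_lt_compat]|left; apply exp_pos]; lra).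
  pose proof (Rle_abs (h t0)); pose proof (Rle_abs (- h t0)); rewrite Rabs_Ropp in *.
  apply Rabs_le; lra.
Qed.

(* The mirror image of growth_right on (-oo, t0], obtained by reflecting t into -t. *)
Lemma growth_left h dh t0 K k : 0 < k ->
  (forall x, x <= t0 -> is_derive h x (dh x)) ->
  (forall x, x <= t0 -> 0 <= dh x <= K * exp (- k * x)) ->
  forall t, t <= t0 -> Rabs (h t) <= Rabs (h t0) + K / k * exp (- k * t).
Proof.
  intros Hk Hd Hdh t Ht.
  pose proof (growth_right (fun y => - h (- y)) (fun y => dh (- y)) (- t0) K k Hk) as G.
  replace (- k * t) with (k * - t) by ring.
  replace (h t) with (- - h (- - t)) by (rewrite !Ropp_involutive; reflexivity).
  rewrite Rabs_Ropp, <- (Rabs_Ropp (h t0)), <- (Ropp_involutive t0).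
  apply G; [| |lra].
  - intros x Hx. replace (dh (- x)) with (- (-1 * dh (- x))) by ring.
    apply (is_derive_opp (fun y => h (- y))).
    apply (is_derive_comp h Ropp); [apply Hd; lra | auto_derive; [exact I | ring]].
  - intros x Hx. replace (k * x) with (- k * - x) by ring. apply Hdh; lra.
Qed.

Definition two_sided_weight (p t : R) : R := exp (t / p) + exp (- t / p).

Lemma weight_ge_growth p t : exp (t / p) <= two_sided_weight p t.
Proof. unfold two_sided_weight; pose proof (exp_pos (- t / p)); lra. Qed.

Lemma weight_ge_decay p t : exp (- t / p) <= two_sided_weight p t.
Proof. unfold two_sided_weight; pose proof (exp_pos (t / p)); lra. Qed.

Lemma weight_ge_1 p t : 1 <= two_sided_weight p t.
Proof.
  unfold two_sided_weight. replace (- t / p) with (- (t / p)) by (unfold Rdiv; ring).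
  pose proof (exp_mul_exp_opp (t / p)); pose proof (exp_pos (t / p)); pose proof (exp_pos (- (t / p))).
  nra.
Qed.

Lemma weight_opp p t : two_sided_weight p (- t) = two_sided_weight p t.
Proof.
  unfold two_sided_weight. replace (- - t / p) with (t / p) by (unfold Rdiv; ring). ring.
Qed.

Lemma decay_times_growth p t x z a b c : 0 <= a -> 0 <= b -> 0 <= c ->
  Rabs x <= a * exp (- t / p) -> Rabs z <= b + c * exp (2 / p * t) ->
  Rabs (x * z) <= a * (b + c) * two_sided_weight p t.
Proof.
  intros Ha Hb Hc Hx Hz. rewrite Rabs_mult.
  assert (Hexp : exp (- t / p) * exp (2 / p * t) = exp (t / p)).
  { rewrite <- exp_plus. f_equal. unfold Rdiv. ring. }
  pose proof (exp_pos (- t / p)); pose proof (exp_pos (t / p)); pose proof (exp_pos (2 / p * t)).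
  eapply Rle_trans; [apply Rmult_le_compat; [apply Rabs_pos | apply Rabs_pos | exact Hx | exact Hz]|].
  unfold two_sided_weight.
  replace (a * exp (- t / p) * (b + c * exp (2 / p * t)))
    with (a * b * exp (- t / p) + a * c * exp (t / p)) by (rewrite <- Hexp; ring).
  assert (0 <= a * b) by nra; assert (0 <= a * c) by nra. nra.
Qed.

Lemma growth_times_decay p t x z a b c : 0 <= a -> 0 <= b -> 0 <= c ->
  Rabs x <= a * exp (t / p) -> Rabs z <= b + c * exp (- (2 / p) * t) ->
  Rabs (x * z) <= a * (b + c) * two_sided_weight p t.
Proof.
  intros Ha Hb Hc Hx Hz. rewrite <- weight_opp.
  apply decay_times_growth; try assumption.
  - replace (- - t / p) with (t / p) by (unfold Rdiv; ring). exact Hx.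
  - replace (2 / p * - t) with (- (2 / p) * t) by ring. exact Hz.
Qed.

Lemma inv_sq_le_of_lower c y x : 0 < c -> c * exp (- y) <= Rabs x -> / x ^ 2 <= / c ^ 2 * exp (2 * y).
Proof.
  intros Hc Hx. pose proof (exp_pos (- y)).
  apply Rle_trans with (/ (c * exp (- y)) ^ 2).
  - rewrite <- (pow2_abs x). apply Rinv_le_contravar; [apply pow_lt; nra | apply pow_incr; nra].
  - right. rewrite exp_double, exp_Ropp. field. split; [lra | apply Rgt_not_eq, exp_pos].
Qed.

Lemma Rabs_le_of_product z u c w N : 0 < c -> 0 < w -> c * w <= Rabs u ->
  Rabs (z * u) <= N -> Rabs z <= N / c * / w.
Proof.
  intros Hc Hw Hu Hzu. rewrite Rabs_mult in Hzu. pose proof (Rabs_pos z).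
  apply Rmult_le_reg_r with (c * w); [nra|].
  replace (N / c * / w * (c * w)) with N by (field; lra). nra.
Qed.

(* A continuous function bounded by the weight on both tails is bounded by it everywhere,
   since it is bounded on the compact middle interval and the weight is >= 1. *)
Lemma global_of_tails f p t1 t2 : t2 <= t1 -> (forall x, continuous f x) ->
  (exists C, 0 <= C /\ forall t, t1 <= t -> Rabs (f t) <= C * two_sided_weight p t) ->
  (exists C, 0 <= C /\ forall t, t <= t2 -> Rabs (f t) <= C * two_sided_weight p t) ->
  exists C, 0 <= C /\ forall t, Rabs (f t) <= C * two_sided_weight p t.
Proof.
  intros Ht Hf [C1 [HC1 H1]] [C2 [HC2 H2]].
  destruct (continuity_ab_maj (fun x => Rabs (f x)) t2 t1 Ht) as [m [Hm _]].
  { intros c _. apply (continuity_pt_comp f Rabs);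
      [apply continuity_pt_filterlim, Hf | apply Rcontinuity_abs]. }
  pose proof (Rabs_pos (f m)).
  exists (C1 + C2 + Rabs (f m)); split; [lra|]. intros t.
  pose proof (weight_ge_1 p t).
  destruct (Rle_dec t1 t) as [Ht1|Ht1]; [pose proof (H1 t Ht1); nra|].
  destruct (Rle_dec t t2) as [Ht2|Ht2]; [pose proof (H2 t Ht2); nra|].
  pose proof (Hm t ltac:(lra)); nra.
Qed.

Lemma ex_RInt_of_continuous (g : R -> R) a b : (forall s, continuous g s) -> ex_RInt g a b.
Proof. intros Hg; apply (ex_RInt_continuous (V := R_CompleteNormedModule)); intros; apply Hg. Qed.

Lemma is_RInt_exp c k a b : k <> 0 ->
  is_RInt (fun s => c * exp (k * s)) a b (c * (exp (k * b) - exp (k * a)) / k).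
Proof.
  intros Hk.
  replace (c * (exp (k * b) - exp (k * a)) / k)
    with (minus (c / k * exp (k * b)) (c / k * exp (k * a)))
    by (unfold minus, plus, opp; simpl; field; exact Hk).
  apply (is_RInt_derive (fun s => c / k * exp (k * s))).
  - intros x _. auto_derive; [exact I | field; exact Hk].
  - intros x _. apply continuity_pt_filterlim, derivable_continuous_pt.
    apply derivable_pt_scal, (derivable_pt_comp (fun s => k * s) exp).
    + apply derivable_pt_scal, derivable_pt_id.
    + apply derivable_pt_exp.
Qed.

Lemma RInt_exp2_bound g a b c1 c2 k1 k2 : a <= b -> k1 <> 0 -> k2 <> 0 ->
  (forall s, continuous g s) ->
  (forall s, a <= s <= b -> Rabs (g s) <= c1 * exp (k1 * s) + c2 * exp (k2 * s)) ->
  Rabs (RInt g a b)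
    <= c1 * (exp (k1 * b) - exp (k1 * a)) / k1 + c2 * (exp (k2 * b) - exp (k2 * a)) / k2.
Proof.
  intros Hab Hk1 Hk2 Hg Hb.
  apply (norm_RInt_le g (fun s => c1 * exp (k1 * s) + c2 * exp (k2 * s)) a b); auto.
  - apply (RInt_correct (V := R_CompleteNormedModule)), ex_RInt_of_continuous, Hg.
  - apply (is_RInt_plus (fun s => c1 * exp (k1 * s)) (fun s => c2 * exp (k2 * s)));
      apply is_RInt_exp; assumption.
Qed.

Lemma exp_integral_neg_rate c k t : 0 <= c -> k < 0 -> 0 <= t ->
  c * (exp (k * t) - exp (k * 0)) / k <= c / (- k).
Proof.
  intros Hc Hk Ht. rewrite Rmult_0_r, exp_0. pose proof (exp_pos (k * t)).
  replace (c * (exp (k * t) - 1) / k) with (c * (1 - exp (k * t)) / (- k)) by (field; lra).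
  unfold Rdiv. apply Rmult_le_compat_r; [left; apply Rinv_0_lt_compat; lra | nra].
Qed.

Section ImproperIntegral.

Variables (g : R -> R) (c k : R).
Hypotheses (Hk : 0 < k) (Hc : 0 <= c) (Hg : forall s, continuous g s)
  (Hdecay : forall s, s <= 0 -> Rabs (g s) <= c * exp (k * s)).

Lemma RInt_left_tail a b : a <= b <= 0 -> Rabs (RInt g a b) <= c * exp (k * b) / k.
Proof.
  intros Hab. eapply Rle_trans.
  - apply (RInt_exp2_bound g a b c 0 k 1); try lra; auto.
    intros s Hs. rewrite Rmult_0_l, Rplus_0_r. apply Hdecay; lra.
  - apply Rle_trans with (c * (exp (k * b) - exp (k * a)) / k); [right; field; lra|].
    pose proof (exp_pos (k * a)). unfold Rdiv. apply Rmult_le_compat_r; [left; apply Rinv_0_lt_compat|]; nra.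
Qed.

Lemma RInt_to_0_cauchy : cauchy (filtermap (fun a => RInt g a 0) (Rbar_locally m_infty)).
Proof.
  intros eps. pose proof (cond_pos eps) as Heps.
  set (r := eps * k / (c + 1)).
  assert (Hr : 0 < r) by (unfold r; apply Rdiv_lt_0_compat; [apply Rmult_lt_0_compat|]; lra).
  set (M := Rmin 0 (ln r / k)).
  assert (HM0 : M <= 0) by apply Rmin_l.
  assert (HekM : exp (k * M) <= r).
  { rewrite <- (exp_ln r Hr). apply exp_le_mono.
    assert (M <= ln r / k) by apply Rmin_r.
    replace (ln r) with (k * (ln r / k)) by (field; lra). nra. }
  exists (RInt g M 0), M. intros a Ha. change (Rabs (RInt g a 0 - RInt g M 0) < eps).
  rewrite <- (RInt_Chasles g a M 0) by (apply ex_RInt_of_continuous, Hg).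
  assert (Hcancel : forall x y : R, plus x y - y = x) by (intros; unfold plus; simpl; ring).
  rewrite Hcancel.
  eapply Rle_lt_trans; [apply RInt_left_tail; lra|].
  apply Rle_lt_trans with (c * r / k).
  - unfold Rdiv. apply Rmult_le_compat_r; [left; apply Rinv_0_lt_compat|]; nra.
  - unfold r. replace (c * (eps * k / (c + 1)) / k) with (eps * (c / (c + 1))) by (field; lra).
    assert (c / (c + 1) < 1) by (apply Rmult_lt_reg_r with (c + 1); field_simplify; lra).
    nra.
Qed.

(* The limit of int_a^0 g is the improper integral; it is bounded by c/k because every
   int_a^0 g is. *)
Lemma improper_integral_at_0 :
  exists L, is_RInt_gen g (Rbar_locally m_infty) (at_point 0) L /\ Rabs L <= c / k.
Proof.
  set (F := fun a => RInt g a 0). set (FF := filtermap F (Rbar_locally m_infty)).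
  assert (Hproper : ProperFilter FF) by (apply filtermap_proper_filter; apply _).
  pose proof (complete_cauchy FF Hproper RInt_to_0_cauchy) as Hlim.
  exists (lim FF). split.
  - intros P [eps HP].
    apply Filter_prod with (Q := fun a => ball (lim FF) eps (F a)) (R := fun b => b = 0).
    + apply Hlim.
    + reflexivity.
    + intros a b Ha Hb. subst b. exists (F a). split; [|apply HP, Ha].
      apply (RInt_correct (V := R_CompleteNormedModule)), ex_RInt_of_continuous, Hg.
  - apply Rle_plus_epsilon. intros eps Heps.
    destruct (Hlim (mkposreal eps Heps)) as [M HM].
    set (a := Rmin 0 (M - 1)).
    assert (Ha : a < M) by (unfold a; pose proof (Rmin_r 0 (M - 1)); lra).
    specialize (HM a Ha). change (Rabs (F a - lim FF) < eps) in HM.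
    assert (HFa : Rabs (F a) <= c / k).
    { eapply Rle_trans; [apply RInt_left_tail; unfold a; pose proof (Rmin_l 0 (M - 1)); lra|].
      rewrite Rmult_0_r, exp_0. lra. }
    pose proof (Rabs_triang_inv (lim FF) (F a)). rewrite Rabs_minus_sym in HM. lra.
Qed.

Lemma int_from_minfty_split :
  exists L, Rabs L <= c / k /\ forall t, int_from_minfty g t = L + RInt g 0 t.
Proof.
  destruct improper_integral_at_0 as [L [HL HLbound]].
  exists L. split; [exact HLbound|]. intros t. unfold int_from_minfty.
  apply (is_RInt_gen_unique (V := R_CompleteNormedModule)).
  apply (is_RInt_gen_Chasles (V := R_NormedModule) g 0 L (RInt g 0 t) HL).
  apply is_RInt_gen_at_point, (RInt_correct (V := R_CompleteNormedModule)), ex_RInt_of_continuous, Hg.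
Qed.

Lemma is_derive_int_from_minfty t : is_derive (int_from_minfty g) t (g t).
Proof.
  destruct int_from_minfty_split as [L [_ HL]].
  apply (is_derive_ext (fun t => L + RInt g 0 t)); [intros; symmetry; apply HL|].
  replace (g t) with (plus 0 (g t)) by (unfold plus; simpl; ring).
  apply (is_derive_plus (fun _ => L) (fun t => RInt g 0 t)).
  - apply (is_derive_const (K := R_AbsRing) (V := R_NormedModule)).
  - apply (is_derive_RInt (V := R_NormedModule) g (fun t => RInt g 0 t) 0 t); [|apply Hg].
    apply filter_forall. intros x.
    apply (RInt_correct (V := R_CompleteNormedModule)), ex_RInt_of_continuous, Hg.
Qed.

End ImproperIntegral.

Section ThetaProfile.

Variable p : R.
Hypothesis Hp : 0 < p < 1.

Lemma alpha_pos : 0 < alpha_p p.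
Proof. unfold alpha_p. apply Rdiv_lt_0_compat; nra. Qed.

Lemma inv_p_pos : 0 < / p.
Proof. apply Rinv_0_lt_compat; lra. Qed.

(* Theta_h = exp(t/p) theta_den^{-1/p}; its logarithmic derivative is theta_logder, and
   theta_d1, theta_d2 are the first and second derivatives of Theta_h. *)
Definition theta_den (t : R) : R := 1 + alpha_p p * exp (2 * t).

Definition theta_logder (t : R) : R := (1 - alpha_p p * exp (2 * t)) / (p * theta_den t).

Definition theta_logder' (t : R) : R := - (4 * alpha_p p * exp (2 * t)) / (p * theta_den t ^ 2).

Definition theta_d1 (t : R) : R := Theta_h p t * theta_logder t.

Definition theta_d2 (t : R) : R := Theta_h p t * (theta_logder t ^ 2 + theta_logder' t).

Lemma theta_den_pos t : 0 < theta_den t.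
Proof. unfold theta_den; pose proof alpha_pos; pose proof (exp_pos (2 * t)); nra. Qed.

Lemma Theta_h_exp_form t : Theta_h p t = exp (t / p - / p * ln (theta_den t)).
Proof.
  unfold Theta_h, Rpower, theta_den, Rminus. rewrite exp_plus, exp_Ropp.
  unfold Rdiv at 1. do 3 f_equal. field; lra.
Qed.

Lemma Theta_h_pos t : 0 < Theta_h p t.
Proof. rewrite Theta_h_exp_form; apply exp_pos. Qed.

Lemma is_derive_Theta_h t : is_derive (Theta_h p) t (theta_d1 t).
Proof.
  eapply is_derive_ext; [intro s; symmetry; apply Theta_h_exp_form|].
  pose proof (theta_den_pos t) as Hden. unfold theta_den in *.
  auto_derive; [lra|].
  unfold theta_d1, theta_logder, theta_den. rewrite Theta_h_exp_form. unfold theta_den.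
  unfold Rminus, Rdiv. field; lra.
Qed.

Lemma is_derive_theta_d1 t : is_derive theta_d1 t (theta_d2 t).
Proof.
  unfold theta_d1, theta_d2.
  replace (Theta_h p t * (theta_logder t ^ 2 + theta_logder' t))
    with (theta_d1 t * theta_logder t + Theta_h p t * theta_logder' t)
    by (unfold theta_d1; ring).
  apply (is_derive_mult (Theta_h p) theta_logder t);
    [apply is_derive_Theta_h | | intros; apply Rmult_comm].
  pose proof (theta_den_pos t) as Hden. unfold theta_logder, theta_logder', theta_den in *.
  auto_derive; [apply Rgt_not_eq; nra | field; lra].
Qed.

Lemma Derive_Theta_h t : Derive (Theta_h p) t = theta_d1 t.
Proof. apply is_derive_unique, is_derive_Theta_h. Qed.

Lemma Derive2_Theta_h t : Derive_n (Theta_h p) 2 t = theta_d2 t.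
Proof.
  simpl. rewrite (Derive_ext _ theta_d1 _ Derive_Theta_h).
  apply is_derive_unique, is_derive_theta_d1.
Qed.

Lemma ex_derive_Theta_h t : ex_derive (Theta_h p) t.
Proof. exists (theta_d1 t); apply is_derive_Theta_h. Qed.

Lemma ex_derive_Derive_Theta_h t : ex_derive (Derive (Theta_h p)) t.
Proof.
  exists (theta_d2 t). eapply is_derive_ext; [intro s; symmetry; apply Derive_Theta_h|].
  apply is_derive_theta_d1.
Qed.

Definition theta_decay_const : R := exp (- ln (alpha_p p) / p).

Lemma theta_decay_const_pos : 0 < theta_decay_const.
Proof. apply exp_pos. Qed.

Lemma Theta_h_le_growth t : Theta_h p t <= exp (t / p).
Proof.
  rewrite Theta_h_exp_form. apply exp_le_mono.
  assert (0 <= ln (theta_den t)).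
  { rewrite <- ln_1. apply ln_le; [lra|]. unfold theta_den.
    pose proof alpha_pos; pose proof (exp_pos (2 * t)); nra. }
  pose proof inv_p_pos. nra.
Qed.

Lemma Theta_h_le_decay t : Theta_h p t <= theta_decay_const * exp (- t / p).
Proof.
  rewrite Theta_h_exp_form. unfold theta_decay_const. rewrite <- exp_plus. apply exp_le_mono.
  assert (ln (alpha_p p) + 2 * t <= ln (theta_den t)).
  { rewrite <- (ln_exp (2 * t)) at 1. rewrite <- ln_mult by (apply alpha_pos || apply exp_pos).
    pose proof alpha_pos; pose proof (exp_pos (2 * t)).
    apply ln_le; [nra | unfold theta_den; lra]. }
  pose proof inv_p_pos.
  assert (0 <= / p * (ln (theta_den t) - ln (alpha_p p) - 2 * t)) by (apply Rmult_le_pos; lra).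
  unfold Rdiv. nra.
Qed.

Lemma Theta_h_weight t : Theta_h p t * two_sided_weight p t <= theta_decay_const + 1.
Proof.
  unfold two_sided_weight. rewrite Rmult_plus_distr_l.
  pose proof (Theta_h_le_growth t); pose proof (Theta_h_le_decay t).
  pose proof (exp_pos (t / p)); pose proof (exp_pos (- t / p)); pose proof (Theta_h_pos t).
  replace (- t / p) with (- (t / p)) in * by (unfold Rdiv; ring).
  pose proof (exp_mul_exp_opp (t / p)). nra.
Qed.

Lemma theta_logder_abs t : Rabs (theta_logder t) <= / p.
Proof.
  unfold theta_logder. pose proof (theta_den_pos t).
  apply Rabs_div_le; [nra|].
  replace (/ p * (p * theta_den t)) with (theta_den t) by (field; lra).
  unfold theta_den in *. pose proof alpha_pos; pose proof (exp_pos (2 * t)).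
  apply Rabs_le; nra.
Qed.

Lemma theta_logder'_abs t : Rabs (theta_logder' t) <= / p.
Proof.
  unfold theta_logder'. pose proof (theta_den_pos t).
  apply Rabs_div_le; [apply Rmult_lt_0_compat; [lra | apply pow_lt; lra]|].
  replace (/ p * (p * theta_den t ^ 2)) with (theta_den t ^ 2) by (field; lra).
  unfold theta_den in *. pose proof alpha_pos; pose proof (exp_pos (2 * t)).
  assert (0 <= (1 - alpha_p p * exp (2 * t)) ^ 2) by apply pow2_ge_0.
  apply Rabs_le; split; nra.
Qed.

Lemma theta_d1_abs t : Rabs (theta_d1 t) <= Theta_h p t / p.
Proof.
  unfold theta_d1. rewrite Rabs_mult, (Rabs_pos_eq (Theta_h p t)) by (left; apply Theta_h_pos).
  pose proof (theta_logder_abs t); pose proof (Theta_h_pos t). unfold Rdiv. nra.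
Qed.

Lemma theta_d2_abs t : Rabs (theta_d2 t) <= Theta_h p t * (/ p ^ 2 + / p).
Proof.
  unfold theta_d2. rewrite Rabs_mult, (Rabs_pos_eq (Theta_h p t)) by (left; apply Theta_h_pos).
  apply Rmult_le_compat_l; [left; apply Theta_h_pos|].
  eapply Rle_trans; [apply Rabs_triang|]. rewrite <- RPow_abs.
  pose proof (theta_logder_abs t); pose proof (theta_logder'_abs t); pose proof (Rabs_pos (theta_logder t)).
  assert (Rabs (theta_logder t) ^ 2 <= / p ^ 2)
    by (replace (/ p ^ 2) with ((/ p) ^ 2) by (field; lra); apply pow_incr; lra).
  lra.
Qed.

Lemma Theta_h_lower t M : theta_den t <= exp M -> exp ((t - M) / p) <= Theta_h p t.
Proof.
  intros HM. rewrite Theta_h_exp_form. apply exp_le_mono.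
  assert (ln (theta_den t) <= M) by (rewrite <- (ln_exp M); apply ln_le; [apply theta_den_pos | exact HM]).
  pose proof inv_p_pos. unfold Rdiv. nra.
Qed.

(* Beyond t_right (alpha e^{2t} >= 3) and below t_left (alpha e^{2t} <= 1/3) the
   logarithmic derivative has a definite sign and |psi| >= 1/(2p), so |Theta'| is
   bounded below by c_right e^{-t/p}, resp. c_left e^{t/p}. *)
Definition t_right : R := (ln 3 - ln (alpha_p p)) / 2.
Definition t_left : R := (- ln 3 - ln (alpha_p p)) / 2.

Lemma t_left_le_right : t_left <= t_right.
Proof.
  unfold t_left, t_right. assert (0 < ln 3) by (rewrite <- ln_1; apply ln_increasing; lra). lra.
Qed.

Lemma alpha_exp_eq t : alpha_p p * exp (2 * t) = exp (ln (alpha_p p) + 2 * t).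
Proof. rewrite exp_plus, exp_ln by apply alpha_pos. reflexivity. Qed.

Definition c_right : R := exp (- ln (2 * alpha_p p) / p) / (2 * p).
Definition c_left : R := exp (- ln 2 / p) / (2 * p).

Lemma c_right_pos : 0 < c_right.
Proof. unfold c_right; apply Rdiv_lt_0_compat; [apply exp_pos | lra]. Qed.

Lemma c_left_pos : 0 < c_left.
Proof. unfold c_left; apply Rdiv_lt_0_compat; [apply exp_pos | lra]. Qed.

Lemma theta_d1_lower_right t : t_right <= t -> c_right * exp (- t / p) <= Rabs (theta_d1 t).
Proof.
  intros Ht.
  assert (H3 : 3 <= alpha_p p * exp (2 * t)).
  { rewrite alpha_exp_eq, <- (exp_ln 3) by lra. apply exp_le_mono. unfold t_right in Ht. lra. }
  assert (HTheta : exp (- ln (2 * alpha_p p) / p) * exp (- t / p) <= Theta_h p t).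
  { rewrite <- exp_plus.
    replace (- ln (2 * alpha_p p) / p + - t / p) with ((t - (ln (2 * alpha_p p) + 2 * t)) / p)
      by (field; lra).
    apply Theta_h_lower. rewrite exp_plus, exp_ln by (pose proof alpha_pos; lra).
    unfold theta_den. lra. }
  assert (Hpsi : theta_logder t <= - / (2 * p)).
  { unfold theta_logder, theta_den. pose proof alpha_pos.
    apply Rmult_le_reg_r with (2 * p * (1 + alpha_p p * exp (2 * t))); [nra|].
    field_simplify; lra. }
  assert (0 < / (2 * p)) by (apply Rinv_0_lt_compat; lra).
  unfold theta_d1, c_right. pose proof (Theta_h_pos t). pose proof (exp_pos (- t / p)).
  rewrite Rabs_mult, Rabs_pos_eq, Rabs_left by lra.
  unfold Rdiv at 1. nra.
Qed.

Lemma theta_d1_lower_left t : t <= t_left -> c_left * exp (t / p) <= Rabs (theta_d1 t).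
Proof.
  intros Ht.
  assert (H3 : 3 * (alpha_p p * exp (2 * t)) <= 1).
  { rewrite alpha_exp_eq. replace 1 with (3 * exp (- ln 3)) by (rewrite exp_Ropp, exp_ln by lra; field).
    apply Rmult_le_compat_l; [lra|]. apply exp_le_mono. unfold t_left in Ht. lra. }
  assert (HTheta : exp (- ln 2 / p) * exp (t / p) <= Theta_h p t).
  { rewrite <- exp_plus. replace (- ln 2 / p + t / p) with ((t - ln 2) / p) by (field; lra).
    apply Theta_h_lower. rewrite exp_ln by lra. unfold theta_den. lra. }
  assert (Hpsi : / (2 * p) <= theta_logder t).
  { unfold theta_logder, theta_den. set (X := alpha_p p * exp (2 * t)) in *.
    assert (0 < X) by (apply Rmult_lt_0_compat; [apply alpha_pos | apply exp_pos]).
    replace ((1 - X) / (p * (1 + X))) with (/ (2 * p) + (1 - 3 * X) / (2 * p * (1 + X)))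
      by (field; lra).
    assert (0 <= (1 - 3 * X) / (2 * p * (1 + X)))
      by (apply Rdiv_le_0_compat; [lra | apply Rmult_lt_0_compat; lra]).
    lra. }
  assert (0 < / (2 * p)) by (apply Rinv_0_lt_compat; lra).
  unfold theta_d1, c_left. pose proof (Theta_h_pos t). pose proof (exp_pos (t / p)).
  rewrite Rabs_mult, !Rabs_pos_eq by lra.
  unfold Rdiv at 1. nra.
Qed.

End ThetaProfile.

(* Growth of Sigma: only the Wronskian relation, written with the closed forms of
   Theta', Theta'', is used. *)
Section SigmaGrowth.

Variable p : R.
Hypothesis Hp : 0 < p < 1.
Variable Sigma : R -> R.
Hypothesis Sigma_derivable : forall t, ex_derive Sigma t.
Hypothesis Sigma'_derivable : forall t, ex_derive (Derive Sigma) t.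
Hypothesis Wronskian : forall t, theta_d1 p t * Derive Sigma t - theta_d2 p t * Sigma t = 1.

(* The Wronskian relation says exactly that (Sigma / Theta')' = 1 / Theta'^2. *)
Lemma is_derive_Sigma_quotient t : theta_d1 p t <> 0 ->
  is_derive (fun s => Sigma s / theta_d1 p s) t (/ theta_d1 p t ^ 2).
Proof.
  intros Hu.
  replace (/ theta_d1 p t ^ 2)
    with ((Derive Sigma t * theta_d1 p t - Sigma t * theta_d2 p t) / theta_d1 p t ^ 2)
    by (replace (Derive Sigma t * theta_d1 p t - Sigma t * theta_d2 p t) with 1
          by (rewrite <- (Wronskian t); ring); field; exact Hu).
  apply is_derive_div; [apply Derive_correct, Sigma_derivable | apply is_derive_theta_d1; exact Hp | exact Hu].
Qed.

(* On [t_right, +oo): |Sigma / Theta'| grows at most like e^{2t/p} and |Theta'| decays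
   like e^{-t/p}. *)
Lemma Sigma_right_tail :
  exists C, 0 <= C /\ forall t, t_right p <= t -> Rabs (Sigma t) <= C * two_sided_weight p t.
Proof.
  pose proof (c_right_pos p Hp) as Hc. pose proof (inv_p_pos p Hp) as Hip.
  set (h := fun s => Sigma s / theta_d1 p s).
  assert (Hlow : forall x, t_right p <= x -> c_right p * exp (- x / p) <= Rabs (theta_d1 p x))
    by (intros; apply theta_d1_lower_right; assumption).
  assert (Hne : forall x, t_right p <= x -> theta_d1 p x <> 0).
  { intros x Hx Hz. specialize (Hlow x Hx). rewrite Hz, Rabs_R0 in Hlow.
    pose proof (exp_pos (- x / p)); nra. }
  assert (Hh : forall t, t_right p <= t ->
            Rabs (h t) <= Rabs (h (t_right p)) + / c_right p ^ 2 / (2 / p) * exp (2 / p * t)).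
  { apply (growth_right h (fun x => / theta_d1 p x ^ 2)); [apply Rdiv_lt_0_compat; lra | |].
    - intros x Hx; apply is_derive_Sigma_quotient, Hne, Hx.
    - intros x Hx. split; [left; apply Rinv_0_lt_compat, pow2_gt_0, Hne, Hx|].
      replace (2 / p * x) with (2 * (x / p)) by (unfold Rdiv; ring).
      apply inv_sq_le_of_lower; [exact Hc|].
      replace (- (x / p)) with (- x / p) by (unfold Rdiv; ring). apply Hlow, Hx. }
  exists (theta_decay_const p / p * (Rabs (h (t_right p)) + / c_right p ^ 2 / (2 / p))).
  split.
  { pose proof (theta_decay_const_pos p). pose proof (Rabs_pos (h (t_right p))).
    assert (0 <= / c_right p ^ 2 / (2 / p))
      by (apply Rdiv_le_0_compat; [left; apply Rinv_0_lt_compat, pow_lt|apply Rdiv_lt_0_compat]; lra).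
    apply Rmult_le_pos; [apply Rdiv_le_0_compat|]; lra. }
  intros t Ht.
  replace (Sigma t) with (theta_d1 p t * h t) by (unfold h; field; apply Hne, Ht).
  apply decay_times_growth; [ | apply Rabs_pos | | | apply Hh, Ht].
  - apply Rdiv_le_0_compat; [left; apply theta_decay_const_pos | lra].
  - apply Rdiv_le_0_compat; [left; apply Rinv_0_lt_compat, pow_lt | apply Rdiv_lt_0_compat]; lra.
  - eapply Rle_trans; [apply theta_d1_abs; exact Hp|].
    pose proof (Theta_h_le_decay p Hp t). unfold Rdiv at 1 3. nra.
Qed.

(* On (-oo, t_left]: |Sigma / Theta'| grows at most like e^{-2t/p} and |Theta'| <= e^{t/p}/p. *)
Lemma Sigma_left_tail :
  exists C, 0 <= C /\ forall t, t <= t_left p -> Rabs (Sigma t) <= C * two_sided_weight p t.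
Proof.
  pose proof (c_left_pos p Hp) as Hc. pose proof (inv_p_pos p Hp) as Hip.
  set (h := fun s => Sigma s / theta_d1 p s).
  assert (Hlow : forall x, x <= t_left p -> c_left p * exp (x / p) <= Rabs (theta_d1 p x))
    by (intros; apply theta_d1_lower_left; assumption).
  assert (Hne : forall x, x <= t_left p -> theta_d1 p x <> 0).
  { intros x Hx Hz. specialize (Hlow x Hx). rewrite Hz, Rabs_R0 in Hlow.
    pose proof (exp_pos (x / p)); nra. }
  assert (Hh : forall t, t <= t_left p ->
            Rabs (h t) <= Rabs (h (t_left p)) + / c_left p ^ 2 / (2 / p) * exp (- (2 / p) * t)).
  { apply (growth_left h (fun x => / theta_d1 p x ^ 2)); [apply Rdiv_lt_0_compat; lra | |].
    - intros x Hx; apply is_derive_Sigma_quotient, Hne, Hx.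
    - intros x Hx. split; [left; apply Rinv_0_lt_compat, pow2_gt_0, Hne, Hx|].
      replace (- (2 / p) * x) with (2 * (- x / p)) by (unfold Rdiv; ring).
      apply inv_sq_le_of_lower; [exact Hc|].
      replace (- (- x / p)) with (x / p) by (unfold Rdiv; ring). apply Hlow, Hx. }
  assert (HK : 0 <= / c_left p ^ 2 / (2 / p))
    by (apply Rdiv_le_0_compat; [left; apply Rinv_0_lt_compat, pow_lt | apply Rdiv_lt_0_compat]; lra).
  exists (/ p * (Rabs (h (t_left p)) + / c_left p ^ 2 / (2 / p))).
  split; [pose proof (Rabs_pos (h (t_left p))); apply Rmult_le_pos; lra|].
  intros t Ht.
  replace (Sigma t) with (theta_d1 p t * h t) by (unfold h; field; apply Hne, Ht).
  apply growth_times_decay; [lra | apply Rabs_pos | exact HK | | apply Hh, Ht].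
  eapply Rle_trans; [apply theta_d1_abs; exact Hp|].
  pose proof (Theta_h_le_growth p Hp t). unfold Rdiv at 1. nra.
Qed.

Lemma Sigma_growth :
  exists C, 0 <= C /\ forall t, Rabs (Sigma t) <= C * two_sided_weight p t.
Proof.
  apply (global_of_tails Sigma p (t_right p) (t_left p));
    [apply t_left_le_right | | apply Sigma_right_tail | apply Sigma_left_tail].
  intros x. apply (ex_derive_continuous (K := R_AbsRing) (V := R_NormedModule)), Sigma_derivable.
Qed.

(* From the Wronskian, Sigma' Theta' = 1 + Theta'' Sigma, and Theta'' Sigma is bounded since
   |Theta''| <= Theta (1/p^2 + 1/p) and Theta times the weight is bounded. *)
Lemma Derive_Sigma_times_theta_d1_bounded :
  exists N, 0 <= N /\ forall t, Rabs (Derive Sigma t * theta_d1 p t) <= N.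
Proof.
  destruct Sigma_growth as [S [HS HSb]].
  pose proof (inv_p_pos p Hp). pose proof (theta_decay_const_pos p).
  assert (0 < / p ^ 2) by (apply Rinv_0_lt_compat, pow_lt; lra).
  assert (HD : 0 <= (/ p ^ 2 + / p) * S) by (apply Rmult_le_pos; lra).
  exists (1 + (/ p ^ 2 + / p) * S * (theta_decay_const p + 1)).
  split; [assert (0 <= (/ p ^ 2 + / p) * S * (theta_decay_const p + 1)) by (apply Rmult_le_pos; lra); lra|].
  intros t. replace (Derive Sigma t * theta_d1 p t) with (1 + theta_d2 p t * Sigma t)
    by (rewrite <- (Wronskian t); ring).
  eapply Rle_trans; [apply Rabs_triang|]. rewrite Rabs_R1, Rabs_mult.
  apply Rplus_le_compat_l.
  pose proof (theta_d2_abs p Hp t); pose proof (HSb t); pose proof (Theta_h_weight p Hp t).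
  pose proof (Theta_h_pos p Hp t); pose proof (weight_ge_1 p t).
  eapply Rle_trans; [apply Rmult_le_compat; [apply Rabs_pos | apply Rabs_pos | eassumption | eassumption]|].
  replace (Theta_h p t * (/ p ^ 2 + / p) * (S * two_sided_weight p t))
    with ((/ p ^ 2 + / p) * S * (Theta_h p t * two_sided_weight p t)) by ring.
  apply Rmult_le_compat_l; lra.
Qed.

(* Dividing the bound on |Sigma' Theta'| by the lower bounds on |Theta'| controls Sigma' on
   the tails. *)
Lemma Derive_Sigma_growth :
  exists C, 0 <= C /\ forall t, Rabs (Derive Sigma t) <= C * two_sided_weight p t.
Proof.
  destruct Derive_Sigma_times_theta_d1_bounded as [N [HN Hprod]].
  pose proof (c_right_pos p Hp); pose proof (c_left_pos p Hp).
  apply (global_of_tails (Derive Sigma) p (t_right p) (t_left p)); [apply t_left_le_right | | |].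
  - intros x. apply (ex_derive_continuous (K := R_AbsRing) (V := R_NormedModule)), Sigma'_derivable.
  - exists (N / c_right p). split; [apply Rdiv_le_0_compat; lra|]. intros t Ht.
    eapply Rle_trans.
    + apply (Rabs_le_of_product _ (theta_d1 p t) (c_right p) (exp (- t / p)));
        [lra | apply exp_pos | apply theta_d1_lower_right; assumption | apply Hprod].
    + replace (/ exp (- t / p)) with (exp (t / p))
        by (rewrite <- exp_Ropp; f_equal; unfold Rdiv; ring).
      apply Rmult_le_compat_l; [apply Rdiv_le_0_compat; lra | apply weight_ge_growth].
  - exists (N / c_left p). split; [apply Rdiv_le_0_compat; lra|]. intros t Ht.
    eapply Rle_trans.
    + apply (Rabs_le_of_product _ (theta_d1 p t) (c_left p) (exp (t / p)));
        [lra | apply exp_pos | apply theta_d1_lower_left; assumption | apply Hprod].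
    + replace (/ exp (t / p)) with (exp (- t / p))
        by (rewrite <- exp_Ropp; f_equal; unfold Rdiv; ring).
      apply Rmult_le_compat_l; [apply Rdiv_le_0_compat; lra | apply weight_ge_decay].
Qed.

Lemma Sigma_and_derivative_growth : exists C, 0 <= C /\ forall t,
  Rabs (Sigma t) <= C * two_sided_weight p t /\ Rabs (Derive Sigma t) <= C * two_sided_weight p t.
Proof.
  destruct Sigma_growth as [C1 [HC1 H1]]. destruct Derive_Sigma_growth as [C2 [HC2 H2]].
  exists (C1 + C2). split; [lra|]. intros t.
  pose proof (weight_ge_1 p t). specialize (H1 t). specialize (H2 t). split; nra.
Qed.

End SigmaGrowth.

Section GammaIntegrals.

Variables (p lam b : R) (Sigma : R -> R) (S : R).
Hypothesis Hp : 0 < p < 1.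
Hypothesis Sigma_derivable : forall t, ex_derive Sigma t.
Hypothesis HS : 0 <= S.
Hypothesis Sigma_bound : forall t, Rabs (Sigma t) <= S * two_sided_weight p t.

Definition B2 : R := Rpower b (-2 * p).
Definition B4 : R := Rpower b (-4 * p).

Definition g1 (s : R) : R := f_b p lam b s * Derive (Theta_h p) s * Theta_h p s.
Definition g2 (s : R) : R := f_b p lam b s * Sigma s * Theta_h p s.

Lemma f_b_abs s : Rabs (f_b p lam b s) <= Rabs lam * B2 * exp (2 * s) + B4 * exp (4 * s).
Proof.
  unfold f_b, B2, B4. eapply Rle_trans; [apply Rabs_triang|].
  rewrite !Rabs_mult, Rabs_Ropp, !(Rabs_pos_eq (exp _)), !(Rabs_pos_eq (Rpower b _))
    by (left; apply exp_pos). lra.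
Qed.

Lemma coefficients_nonneg : 0 <= Rabs lam * B2 /\ 0 <= B4.
Proof.
  pose proof (Rabs_pos lam). split; [apply Rmult_le_pos; [|left; apply Rpower_pos]| left; apply Rpower_pos]; lra.
Qed.

Lemma g1_continuous s : continuous g1 s.
Proof.
  apply (ex_derive_continuous (K := R_AbsRing) (V := R_NormedModule)).
  unfold g1, f_b. apply ex_derive_mult; [apply ex_derive_mult|].
  - auto_derive; exact I.
  - exact (ex_derive_Derive_Theta_h p Hp s).
  - exact (ex_derive_Theta_h p Hp s).
Qed.

Lemma g2_continuous s : continuous g2 s.
Proof.
  apply (ex_derive_continuous (K := R_AbsRing) (V := R_NormedModule)).
  unfold g2, f_b. apply ex_derive_mult; [apply ex_derive_mult|].
  - auto_derive; exact I.
  - apply Sigma_derivable.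
  - exact (ex_derive_Theta_h p Hp s).
Qed.

Lemma g1_abs_Theta s : Rabs (g1 s) <= Rabs (f_b p lam b s) * (Theta_h p s ^ 2 / p).
Proof.
  unfold g1. rewrite Derive_Theta_h by exact Hp.
  rewrite !Rabs_mult, (Rabs_pos_eq (Theta_h p s)) by (left; apply Theta_h_pos; exact Hp).
  rewrite Rmult_assoc. apply Rmult_le_compat_l; [apply Rabs_pos|].
  pose proof (theta_d1_abs p Hp s); pose proof (Theta_h_pos p Hp s).
  replace (Theta_h p s ^ 2 / p) with (Theta_h p s / p * Theta_h p s) by (field; lra).
  apply Rmult_le_compat_r; lra.
Qed.

Lemma g1_decay s : s <= 0 -> Rabs (g1 s) <= (Rabs lam * B2 + B4) / p * exp (2 * s).
Proof.
  intros Hs. eapply Rle_trans; [apply g1_abs_Theta|].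
  destruct coefficients_nonneg as [H2 H4]. pose proof (inv_p_pos p Hp).
  pose proof (Theta_h_le_growth p Hp s); pose proof (Theta_h_pos p Hp s).
  assert (exp (s / p) <= 1) by (rewrite <- exp_0; apply exp_le_mono; unfold Rdiv; nra).
  assert (Theta_h p s ^ 2 <= 1) by nra.
  assert (exp (4 * s) <= exp (2 * s)) by (apply exp_le_mono; lra).
  pose proof (exp_pos (2 * s)). pose proof (f_b_abs s). pose proof (Rabs_pos (f_b p lam b s)).
  assert (Rabs (f_b p lam b s) <= (Rabs lam * B2 + B4) * exp (2 * s)) by nra.
  unfold Rdiv. replace ((Rabs lam * B2 + B4) * / p * exp (2 * s))
    with ((Rabs lam * B2 + B4) * exp (2 * s) * / p) by ring.
  rewrite <- Rmult_assoc. apply Rmult_le_compat; nra.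
Qed.

Lemma g1_abs s : Rabs (g1 s) <= theta_decay_const p ^ 2 / p * (Rabs lam * B2) * exp ((2 - 2 / p) * s)
                               + theta_decay_const p ^ 2 / p * B4 * exp ((4 - 2 / p) * s).
Proof.
  eapply Rle_trans; [apply g1_abs_Theta|].
  pose proof (f_b_abs s); pose proof (Theta_h_le_decay p Hp s); pose proof (Theta_h_pos p Hp s).
  pose proof (inv_p_pos p Hp); pose proof (Rabs_pos (f_b p lam b s)).
  assert (Theta_h p s ^ 2 <= theta_decay_const p ^ 2 * exp (2 * (- s / p))).
  { rewrite exp_double, <- Rpow_mult_distr. apply pow_incr; lra. }
  eapply Rle_trans.
  { apply Rmult_le_compat; [apply Rabs_pos | apply Rdiv_le_0_compat; [apply pow2_ge_0|lra] | eassumption |].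
    unfold Rdiv. apply Rmult_le_compat_r; [lra | eassumption]. }
  replace ((2 - 2 / p) * s) with (2 * s + 2 * (- s / p)) by (field; lra).
  replace ((4 - 2 / p) * s) with (4 * s + 2 * (- s / p)) by (field; lra).
  rewrite !exp_plus. right. field. lra.
Qed.

Lemma g2_abs s : Rabs (g2 s) <= S * (theta_decay_const p + 1) * (Rabs lam * B2 * exp (2 * s) + B4 * exp (4 * s)).
Proof.
  unfold g2. rewrite !Rabs_mult, (Rabs_pos_eq (Theta_h p s)) by (left; apply Theta_h_pos; exact Hp).
  pose proof (Sigma_bound s); pose proof (Theta_h_weight p Hp s); pose proof (Theta_h_pos p Hp s).
  pose proof (f_b_abs s) as Hf; pose proof (Rabs_pos (f_b p lam b s)) as Hf0.
  pose proof (Rabs_pos (Sigma s)); pose proof (weight_ge_1 p s).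
  rewrite Rmult_assoc, Rmult_comm.
  apply Rmult_le_compat; [apply Rmult_le_pos; lra | exact Hf0 | | exact Hf].
  apply Rle_trans with (S * two_sided_weight p s * Theta_h p s); [apply Rmult_le_compat_r; lra|].
  replace (S * two_sided_weight p s * Theta_h p s) with (S * (Theta_h p s * two_sided_weight p s)) by ring.
  apply Rmult_le_compat_l; lra.
Qed.

Lemma g2_decay s : s <= 0 ->
  Rabs (g2 s) <= S * (theta_decay_const p + 1) * (Rabs lam * B2 + B4) * exp (2 * s).
Proof.
  intros Hs. eapply Rle_trans; [apply g2_abs|].
  destruct coefficients_nonneg as [H2 H4]. pose proof (theta_decay_const_pos p).
  assert (exp (4 * s) <= exp (2 * s)) by (apply exp_le_mono; lra).
  pose proof (exp_pos (2 * s)).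
  replace (S * (theta_decay_const p + 1) * (Rabs lam * B2 + B4) * exp (2 * s))
    with (S * (theta_decay_const p + 1) * ((Rabs lam * B2 + B4) * exp (2 * s))) by ring.
  apply Rmult_le_compat_l; [apply Rmult_le_pos; lra | nra].
Qed.

Lemma g1_coeff_nonneg : 0 <= (Rabs lam * B2 + B4) / p.
Proof. destruct coefficients_nonneg. apply Rdiv_le_0_compat; lra. Qed.

Lemma g2_coeff_nonneg : 0 <= S * (theta_decay_const p + 1) * (Rabs lam * B2 + B4).
Proof.
  destruct coefficients_nonneg. pose proof (theta_decay_const_pos p).
  apply Rmult_le_pos; [apply Rmult_le_pos|]; lra.
Qed.

Definition J1 (t : R) : R := int_from_minfty g1 t.
Definition J2 (t : R) : R := int_from_minfty g2 t.

(* gamma_h and its derivative; the terms Sigma g1 and Theta' g2 cancel. *)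
Lemma gamma_h_eq t : gamma_h p lam b Sigma t = Sigma t * J1 t - theta_d1 p t * J2 t.
Proof. unfold gamma_h, J1, J2. fold g1 g2. rewrite Derive_Theta_h by exact Hp. reflexivity. Qed.

Lemma Derive_gamma_h t :
  Derive (gamma_h p lam b Sigma) t = Derive Sigma t * J1 t - theta_d2 p t * J2 t.
Proof.
  apply is_derive_unique.
  eapply is_derive_ext; [intros s; symmetry; apply gamma_h_eq|].
  pose proof (is_derive_int_from_minfty g1 _ 2 ltac:(lra) g1_coeff_nonneg g1_continuous g1_decay t) as HJ1.
  pose proof (is_derive_int_from_minfty g2 _ 2 ltac:(lra) g2_coeff_nonneg g2_continuous g2_decay t) as HJ2.
  replace (Derive Sigma t * J1 t - theta_d2 p t * J2 t) with
    (minus (plus (mult (Derive Sigma t) (J1 t)) (mult (Sigma t) (g1 t)))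
           (plus (mult (theta_d2 p t) (J2 t)) (mult (theta_d1 p t) (g2 t)))).
  - apply (is_derive_minus (fun t => Sigma t * J1 t) (fun t => theta_d1 p t * J2 t)).
    + apply (is_derive_mult Sigma J1); [apply Derive_correct, Sigma_derivable | exact HJ1 | intros; apply Rmult_comm].
    + apply (is_derive_mult (theta_d1 p) J2);
        [apply is_derive_theta_d1; exact Hp | exact HJ2 | intros; apply Rmult_comm].
  - unfold minus, plus, mult, opp; simpl. unfold g1, g2. rewrite Derive_Theta_h by exact Hp. ring.
Qed.

Lemma J_le_split g L t : int_from_minfty g t = L + RInt g 0 t ->
  Rabs (int_from_minfty g t) <= Rabs L + Rabs (RInt g 0 t).
Proof. intros ->. apply Rabs_triang. Qed.

Lemma J2_bound t : 0 <= t ->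
  Rabs (J2 t) <= S * (theta_decay_const p + 1) * (Rabs lam * B2 * exp (2 * t) + B4 * exp (4 * t)).
Proof.
  intros Ht. destruct coefficients_nonneg as [H2 H4].
  pose proof (theta_decay_const_pos p). set (M := S * (theta_decay_const p + 1)).
  assert (HM : 0 <= M) by (unfold M; apply Rmult_le_pos; lra).
  destruct (int_from_minfty_split g2 _ 2 ltac:(lra) g2_coeff_nonneg g2_continuous g2_decay)
    as [L [HL HJ]].
  assert (HR : Rabs (RInt g2 0 t) <= M * (Rabs lam * B2) * (exp (2 * t) - 1) / 2
                                   + M * B4 * (exp (4 * t) - 1) / 4).
  { eapply Rle_trans; [apply (RInt_exp2_bound g2 0 t (M * (Rabs lam * B2)) (M * B4) 2 4); try lra|].
    - apply g2_continuous.
    - intros s _. eapply Rle_trans; [apply g2_abs|]. right; unfold M; ring.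
    - rewrite !Rmult_0_r, exp_0. right; reflexivity. }
  unfold J2. eapply Rle_trans; [apply J_le_split, HJ|]. fold M in HL.
  pose proof (exp_ge_1 (2 * t) ltac:(lra)); pose proof (exp_ge_1 (4 * t) ltac:(lra)).
  assert (0 <= M * (Rabs lam * B2) * (exp (2 * t) - 1)) by (apply Rmult_le_pos; [apply Rmult_le_pos|]; lra).
  assert (0 <= M * B4 * (exp (4 * t) - 1)) by (apply Rmult_le_pos; [apply Rmult_le_pos|]; lra).
  assert (0 <= M * (Rabs lam * B2)) by (apply Rmult_le_pos; lra).
  assert (0 <= M * B4) by (apply Rmult_le_pos; lra).
  replace (M * (Rabs lam * B2 + B4) / 2) with (M * (Rabs lam * B2) / 2 + M * B4 / 2) in HL by field.
  nra.
Qed.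

Lemma J1_split : exists L, Rabs L <= (Rabs lam * B2 + B4) / (2 * p) /\
  forall t, J1 t = L + RInt g1 0 t.
Proof.
  destruct (int_from_minfty_split g1 _ 2 ltac:(lra) g1_coeff_nonneg g1_continuous g1_decay)
    as [L [HL HJ]].
  exists L. split; [|exact HJ]. eapply Rle_trans; [exact HL|]. right; field; lra.
Qed.

(* For t >= 0, J1 is bounded uniformly when p < 1/2 (both rates 2 - 2/p, 4 - 2/p are
   negative); otherwise the b^{-4p} part may grow like e^{4t}. *)
Definition K1_small : R :=
  / (2 * p) + theta_decay_const p ^ 2 / p / (2 / p - 2) + theta_decay_const p ^ 2 / p / (2 / p - 4).

Definition K1_large : R :=
  / (2 * p) + theta_decay_const p ^ 2 / p / (2 / p - 2) + theta_decay_const p ^ 2 / 2.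

Lemma decay_coeff_nonneg : 0 <= theta_decay_const p ^ 2 / p.
Proof. apply Rdiv_le_0_compat; [apply pow2_ge_0 | lra]. Qed.

Lemma K1_small_nonneg : p < 1 / 2 -> 0 <= K1_small.
Proof.
  intros Hsmall. pose proof decay_coeff_nonneg.
  assert (0 < 2 / p - 4) by (apply Rmult_lt_reg_r with p; [lra | field_simplify; lra]).
  assert (0 < 2 / p - 2) by (apply Rmult_lt_reg_r with p; [lra | field_simplify; lra]).
  assert (0 < / (2 * p)) by (apply Rinv_0_lt_compat; lra).
  assert (0 <= theta_decay_const p ^ 2 / p / (2 / p - 2)) by (apply Rdiv_le_0_compat; lra).
  assert (0 <= theta_decay_const p ^ 2 / p / (2 / p - 4)) by (apply Rdiv_le_0_compat; lra).
  unfold K1_small. lra.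
Qed.

Lemma K1_large_nonneg : 0 <= K1_large.
Proof.
  pose proof decay_coeff_nonneg.
  assert (0 < 2 / p - 2) by (apply Rmult_lt_reg_r with p; [lra | field_simplify; lra]).
  assert (0 < / (2 * p)) by (apply Rinv_0_lt_compat; lra).
  assert (0 <= theta_decay_const p ^ 2 / p / (2 / p - 2)) by (apply Rdiv_le_0_compat; lra).
  assert (0 <= theta_decay_const p ^ 2 / 2) by (apply Rdiv_le_0_compat; [apply pow2_ge_0 | lra]).
  unfold K1_large. lra.
Qed.

Lemma RInt_g1_small t : 0 <= t -> p < 1 / 2 ->
  Rabs (RInt g1 0 t) <= theta_decay_const p ^ 2 / p / (2 / p - 2) * (Rabs lam * B2)
                        + theta_decay_const p ^ 2 / p / (2 / p - 4) * B4.
Proof.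
  intros Ht Hsmall. destruct coefficients_nonneg as [H2 H4]. pose proof decay_coeff_nonneg as HA.
  assert (Hk1 : 2 - 2 / p < 0) by (apply Rmult_lt_reg_r with p; [lra | field_simplify; lra]).
  assert (Hk2 : 4 - 2 / p < 0) by (apply Rmult_lt_reg_r with p; [lra | field_simplify; lra]).
  eapply Rle_trans; [apply (RInt_exp2_bound g1 0 t (theta_decay_const p ^ 2 / p * (Rabs lam * B2))
      (theta_decay_const p ^ 2 / p * B4) (2 - 2 / p) (4 - 2 / p)); try lra;
    [apply g1_continuous | intros; apply g1_abs]|].
  apply Rplus_le_compat; (eapply Rle_trans; [apply exp_integral_neg_rate; try lra;
    apply Rmult_le_pos; assumption|]; right; field; lra).
Qed.

Lemma J1_bound_small t : 0 <= t -> p < 1 / 2 -> Rabs (J1 t) <= K1_small * (Rabs lam * B2 + B4).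
Proof.
  intros Ht Hsmall. destruct coefficients_nonneg as [H2 H4]. pose proof decay_coeff_nonneg as HA.
  assert (0 < 2 / p - 2) by (apply Rmult_lt_reg_r with p; [lra | field_simplify; lra]).
  assert (0 < 2 / p - 4) by (apply Rmult_lt_reg_r with p; [lra | field_simplify; lra]).
  destruct J1_split as [L [HL HJ]].
  eapply Rle_trans; [apply J_le_split, HJ|].
  pose proof (RInt_g1_small t Ht Hsmall).
  assert (0 <= theta_decay_const p ^ 2 / p / (2 / p - 2) * B4).
  { apply Rmult_le_pos; [apply Rdiv_le_0_compat|]; lra. }
  assert (0 <= theta_decay_const p ^ 2 / p / (2 / p - 4) * (Rabs lam * B2)).
  { apply Rmult_le_pos; [apply Rdiv_le_0_compat|]; lra. }
  unfold K1_small. unfold Rdiv in HL at 1. lra.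
Qed.

(* On [0, t], the rate 4 - 2/p of g1 may be nonnegative; bounding e^{4s} by e^{4t} leaves
   the negative rate -2/p. *)
Lemma g1_abs_up_to t s : 0 <= s <= t ->
  Rabs (g1 s) <= theta_decay_const p ^ 2 / p * (Rabs lam * B2) * exp ((2 - 2 / p) * s)
                 + theta_decay_const p ^ 2 / p * B4 * exp (4 * t) * exp (- 2 / p * s).
Proof.
  intros Hs. destruct coefficients_nonneg as [H2 H4]. pose proof decay_coeff_nonneg as HA.
  eapply Rle_trans; [apply g1_abs|]. apply Rplus_le_compat_l.
  replace ((4 - 2 / p) * s) with (4 * s + - 2 / p * s) by (field; lra). rewrite exp_plus.
  pose proof (exp_pos (- 2 / p * s)). pose proof (exp_le_mono (4 * s) (4 * t) ltac:(lra)).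
  replace (theta_decay_const p ^ 2 / p * B4 * (exp (4 * s) * exp (- 2 / p * s)))
    with (theta_decay_const p ^ 2 / p * B4 * exp (- 2 / p * s) * exp (4 * s)) by ring.
  replace (theta_decay_const p ^ 2 / p * B4 * exp (4 * t) * exp (- 2 / p * s))
    with (theta_decay_const p ^ 2 / p * B4 * exp (- 2 / p * s) * exp (4 * t)) by ring.
  apply Rmult_le_compat_l; [apply Rmult_le_pos; [apply Rmult_le_pos|]|]; lra.
Qed.

Lemma RInt_g1_large t : 0 <= t ->
  Rabs (RInt g1 0 t) <= theta_decay_const p ^ 2 / p / (2 / p - 2) * (Rabs lam * B2)
                        + theta_decay_const p ^ 2 / 2 * (B4 * exp (4 * t)).
Proof.
  intros Ht. destruct coefficients_nonneg as [H2 H4]. pose proof decay_coeff_nonneg as HA.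
  assert (Hk1 : 2 - 2 / p < 0) by (apply Rmult_lt_reg_r with p; [lra | field_simplify; lra]).
  assert (Hk2 : - 2 / p < 0) by (pose proof (inv_p_pos p Hp); unfold Rdiv; lra).
  pose proof (exp_pos (4 * t)).
  assert (0 <= theta_decay_const p ^ 2 / p * (Rabs lam * B2)) by (apply Rmult_le_pos; lra).
  assert (0 <= theta_decay_const p ^ 2 / p * B4 * exp (4 * t))
    by (apply Rmult_le_pos; [apply Rmult_le_pos|]; lra).
  eapply Rle_trans; [apply (RInt_exp2_bound g1 0 t (theta_decay_const p ^ 2 / p * (Rabs lam * B2))
      (theta_decay_const p ^ 2 / p * B4 * exp (4 * t)) (2 - 2 / p) (- 2 / p)); try lra;
    [apply g1_continuous | intros; apply g1_abs_up_to; assumption]|].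
  apply Rplus_le_compat; (eapply Rle_trans; [apply exp_integral_neg_rate; try lra; assumption|];
    right; field; lra).
Qed.

Lemma J1_bound_large t : 0 <= t -> Rabs (J1 t) <= K1_large * (Rabs lam * B2 + B4 * exp (4 * t)).
Proof.
  intros Ht. destruct coefficients_nonneg as [H2 H4]. pose proof decay_coeff_nonneg as HA.
  assert (0 < 2 / p - 2) by (apply Rmult_lt_reg_r with p; [lra | field_simplify; lra]).
  pose proof (exp_ge_1 (4 * t) ltac:(lra)).
  destruct J1_split as [L [HL HJ]].
  eapply Rle_trans; [apply J_le_split, HJ|].
  pose proof (RInt_g1_large t Ht).
  assert (0 <= theta_decay_const p ^ 2 / p / (2 / p - 2) * (B4 * exp (4 * t))).
  { apply Rmult_le_pos; [apply Rdiv_le_0_compat|]; nra. }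
  assert (0 <= theta_decay_const p ^ 2 / 2 * (Rabs lam * B2)).
  { apply Rmult_le_pos; [apply Rdiv_le_0_compat; [apply pow2_ge_0|]|]; lra. }
  assert (/ (2 * p) * B4 <= / (2 * p) * (B4 * exp (4 * t))).
  { apply Rmult_le_compat_l; [left; apply Rinv_0_lt_compat; lra | nra]. }
  assert (0 <= / (2 * p)) by (left; apply Rinv_0_lt_compat; lra).
  unfold K1_large. unfold Rdiv in HL at 1. nra.
Qed.

End GammaIntegrals.

(* The shape of both gamma_h = Sigma J1 - Theta' J2 and gamma_h' = Sigma' J1 - Theta'' J2. *)
Lemma difference_of_products_bound x u y v Sx Ku Ay Kv Wu Zv P Q :
  0 <= Sx -> 0 <= Ku -> 0 <= Ay -> 0 <= Kv -> 0 <= Wu -> Wu <= Zv -> 0 <= P -> 0 <= Q ->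
  Rabs x <= Sx * (P + Q) -> Rabs y <= Ay * Q -> Rabs u <= Ku * Wu -> Rabs v <= Kv * Zv ->
  Rabs (x * u - y * v) <= (Sx * Ku + Ay * Kv) * (Zv * Q + Wu * P).
Proof.
  intros. unfold Rminus. eapply Rle_trans; [apply Rabs_triang|]. rewrite Rabs_Ropp, !Rabs_mult.
  assert (Rabs x * Rabs u <= Sx * (P + Q) * (Ku * Wu))
    by (apply Rmult_le_compat; auto; apply Rabs_pos).
  assert (Rabs y * Rabs v <= Ay * Q * (Kv * Zv))
    by (apply Rmult_le_compat; auto; apply Rabs_pos).
  assert (0 <= Sx * Ku) by (apply Rmult_le_pos; assumption).
  assert (0 <= Ay * Kv) by (apply Rmult_le_pos; assumption).
  assert (Wu * Q <= Zv * Q) by (apply Rmult_le_compat_r; assumption).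
  assert (0 <= Zv * Q) by (apply Rmult_le_pos; lra).
  assert (0 <= Wu * P) by (apply Rmult_le_pos; assumption).
  nra.
Qed.

Lemma window_factor p b t T a k : 0 < p -> 1 <= b -> 0 < T -> 0 < k <= 4 ->
  t <= T + a * p * ln b ->
  Rpower b (- k * p) * exp (k * t) <= exp (4 * T) * Rpower b (- k * p * (1 - a)).
Proof.
  intros Hp Hb HT Hk Ht. unfold Rpower. rewrite <- !exp_plus. apply exp_le_mono.
  assert (0 <= ln b) by (rewrite <- ln_1; apply ln_le; lra).
  assert (k * t <= k * (T + a * p * ln b)) by (apply Rmult_le_compat_l; lra).
  nra.
Qed.

Section FinalEstimate.

Variables (p lam : R) (Sigma : R -> R) (S T : R).
Hypothesis Hp : 0 < p < 1.
Hypothesis Sigma_derivable : forall t, ex_derive Sigma t.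
Hypothesis HS : 0 <= S.
Hypothesis Sigma_bound : forall t, Rabs (Sigma t) <= S * two_sided_weight p t.
Hypothesis Sigma'_bound : forall t, Rabs (Derive Sigma t) <= S * two_sided_weight p t.
Hypothesis HT : 0 < T.

Definition theta_bound_const : R :=
  theta_decay_const p / p + theta_decay_const p * (/ p ^ 2 + / p).

Lemma theta_bound_const_pos : 0 < theta_bound_const.
Proof.
  pose proof (theta_decay_const_pos p); pose proof (inv_p_pos p Hp).
  assert (0 < / p ^ 2) by (apply Rinv_0_lt_compat, pow_lt; lra).
  unfold theta_bound_const, Rdiv.
  apply Rplus_lt_0_compat; apply Rmult_lt_0_compat; lra.
Qed.

Lemma theta_d1_decay t : Rabs (theta_d1 p t) <= theta_bound_const * exp (- t / p).
Proof.
  eapply Rle_trans; [apply theta_d1_abs; exact Hp|].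
  pose proof (Theta_h_le_decay p Hp t); pose proof (inv_p_pos p Hp).
  pose proof (theta_decay_const_pos p); pose proof (exp_pos (- t / p)).
  assert (0 < / p ^ 2) by (apply Rinv_0_lt_compat, pow_lt; lra).
  set (e := exp (- t / p)) in *. set (A := theta_decay_const p) in *.
  unfold Rdiv at 1. apply Rle_trans with (A * e * / p); [apply Rmult_le_compat_r; lra|].
  assert (0 <= A * (/ p ^ 2 + / p) * e) by (apply Rmult_le_pos; [apply Rmult_le_pos|]; lra).
  assert (0 <= A * / p * e) by (apply Rmult_le_pos; [apply Rmult_le_pos|]; lra).
  unfold theta_bound_const. fold A. unfold Rdiv. nra.
Qed.

Lemma theta_d2_decay t : Rabs (theta_d2 p t) <= theta_bound_const * exp (- t / p).
Proof.
  eapply Rle_trans; [apply theta_d2_abs; exact Hp|].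
  pose proof (Theta_h_le_decay p Hp t); pose proof (inv_p_pos p Hp).
  pose proof (theta_decay_const_pos p); pose proof (exp_pos (- t / p)).
  assert (0 < / p ^ 2) by (apply Rinv_0_lt_compat, pow_lt; lra).
  set (e := exp (- t / p)) in *. set (A := theta_decay_const p) in *.
  apply Rle_trans with (A * e * (/ p ^ 2 + / p)); [apply Rmult_le_compat_r; lra|].
  assert (0 <= A * (/ p ^ 2 + / p) * e) by (apply Rmult_le_pos; [apply Rmult_le_pos|]; lra).
  assert (0 <= A * / p * e) by (apply Rmult_le_pos; [apply Rmult_le_pos|]; lra).
  unfold theta_bound_const. fold A. unfold Rdiv. nra.
Qed.

Definition K2 : R := S * (theta_decay_const p + 1) * exp (4 * T).
Definition C_small : R := S * K1_small p + theta_bound_const * K2.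
Definition C_large : R := S * (K1_large p * exp (4 * T)) + theta_bound_const * K2.

Section AtScale.

Variables (b a t : R).
Hypothesis Hb : 1 <= b.
Hypothesis Ha : 0 < a.
Hypothesis Ht : a * p * ln b <= t <= T + a * p * ln b.

Let Z : R := Rabs lam * Rpower b (-2 * p * (1 - a)) + Rpower b (-4 * p * (1 - a)).

Lemma t_nonneg : 0 <= t.
Proof.
  assert (0 <= ln b) by (rewrite <- ln_1; apply ln_le; lra).
  assert (0 <= a * p * ln b) by (apply Rmult_le_pos; [apply Rmult_le_pos|]; lra). lra.
Qed.

Lemma B2_le_window : B2 p b <= Rpower b (-2 * p * (1 - a)).
Proof.
  apply Rle_Rpower; [exact Hb|].
  assert (0 <= p * a) by (apply Rmult_le_pos; lra). lra.
Qed.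

Lemma B4_le_window : B4 p b <= Rpower b (-4 * p * (1 - a)).
Proof.
  apply Rle_Rpower; [exact Hb|].
  assert (0 <= p * a) by (apply Rmult_le_pos; lra). lra.
Qed.

Lemma B2_window : B2 p b * exp (2 * t) <= exp (4 * T) * Rpower b (-2 * p * (1 - a)).
Proof.
  unfold B2. replace (-2 * p) with (- (2) * p) by ring.
  replace (-2 * p * (1 - a)) with (- (2) * p * (1 - a)) by ring.
  apply window_factor; lra.
Qed.

Lemma B4_window : B4 p b * exp (4 * t) <= exp (4 * T) * Rpower b (-4 * p * (1 - a)).
Proof.
  unfold B4. replace (-4 * p) with (- (4) * p) by ring.
  replace (-4 * p * (1 - a)) with (- (4) * p * (1 - a)) by ring.
  apply window_factor; lra.
Qed.

Lemma J2_window : Rabs (J2 p lam b Sigma t) <= K2 * Z.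
Proof.
  eapply Rle_trans; [apply (J2_bound p lam b Sigma S); auto; apply t_nonneg|].
  pose proof B2_window; pose proof B4_window; pose proof (Rabs_pos lam).
  pose proof (theta_decay_const_pos p).
  unfold K2, Z.
  replace (S * (theta_decay_const p + 1) * exp (4 * T) * _)
    with (S * (theta_decay_const p + 1) * (exp (4 * T) * (Rabs lam * Rpower b (-2 * p * (1 - a))
                                                          + Rpower b (-4 * p * (1 - a))))) by ring.
  apply Rmult_le_compat_l; [apply Rmult_le_pos; lra | nra].
Qed.

(* Both estimates follow from a bound K1 W on J1 with W <= Z, where Z is the coefficient of
   e^{-t/p} in bound_small and bound_large. *)
Lemma gamma_pair_bound K1 W : 0 <= K1 -> 0 <= W -> W <= Z ->
  Rabs (J1 p lam b t) <= K1 * W ->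
  Rabs (gamma_h p lam b Sigma t) <= (S * K1 + theta_bound_const * K2) * (Z * exp (- t / p) + W * exp (t / p)) /\
  Rabs (Derive (gamma_h p lam b Sigma) t)
    <= (S * K1 + theta_bound_const * K2) * (Z * exp (- t / p) + W * exp (t / p)).
Proof.
  intros HK1 HW HWZ HJ1. pose proof theta_bound_const_pos.
  assert (0 <= K2) by (unfold K2; pose proof (theta_decay_const_pos p); pose proof (exp_pos (4 * T));
                       apply Rmult_le_pos; [apply Rmult_le_pos|]; lra).
  pose proof (exp_pos (t / p)); pose proof (exp_pos (- t / p)).
  rewrite (gamma_h_eq p lam b Sigma Hp), (Derive_gamma_h p lam b Sigma S) by auto.
  split; apply difference_of_products_bound; try lra; try assumption;
    try apply J2_window; try apply theta_d1_decay; try apply theta_d2_decay.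
  - apply Sigma_bound.
  - apply Sigma'_bound.
Qed.

Lemma gamma_estimate_small : p < 1 / 2 ->
  Rabs (gamma_h p lam b Sigma t) <= C_small * bound_small p lam b t a /\
  Rabs (Derive (gamma_h p lam b Sigma) t) <= C_small * bound_small p lam b t a.
Proof.
  intros Hsmall. destruct (coefficients_nonneg p lam b) as [H2 H4]. pose proof (Rabs_pos lam).
  pose proof B2_le_window; pose proof B4_le_window.
  unfold B2, B4 in *.
  apply gamma_pair_bound; [apply (K1_small_nonneg p Hp), Hsmall | lra | unfold Z; nra | ].
  apply J1_bound_small; [exact Hp | apply t_nonneg | exact Hsmall].
Qed.

(* For any p in (0, 1), with W = |lam| b^{-2p} + b^{-4p(1-a)}; this is the estimate
   used when p >= 1/2. *)
Lemma gamma_estimate_large :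
  Rabs (gamma_h p lam b Sigma t) <= C_large * bound_large p lam b t a /\
  Rabs (Derive (gamma_h p lam b Sigma) t) <= C_large * bound_large p lam b t a.
Proof.
  destruct (coefficients_nonneg p lam b) as [H2 H4]. pose proof (Rabs_pos lam).
  pose proof B2_le_window; pose proof B4_le_window.
  pose proof (K1_large_nonneg p Hp). pose proof (exp_ge_1 (4 * T) ltac:(lra)). pose proof B4_window.
  unfold B2, B4 in *.
  apply gamma_pair_bound; [apply Rmult_le_pos; lra | nra | unfold Z; nra | ].
  eapply Rle_trans; [apply J1_bound_large; [exact Hp | apply t_nonneg]|].
  rewrite Rmult_assoc. apply Rmult_le_compat_l; [lra|]. unfold B2, B4 in *. nra.
Qed.

End AtScale.

End FinalEstimate.

(* The right-hand sides of the theorem are nonnegative, so a single constant serves both regimes. *)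
Lemma bound_small_nonneg p lam b t a : 0 <= bound_small p lam b t a.
Proof.
  unfold bound_small. pose proof (Rabs_pos lam).
  pose proof (Rpower_pos b (-2 * p * (1 - a))); pose proof (Rpower_pos b (-4 * p * (1 - a))).
  pose proof (Rpower_pos b (-2 * p)); pose proof (Rpower_pos b (-4 * p)).
  pose proof (exp_pos (- t / p)); pose proof (exp_pos (t / p)).
  apply Rplus_le_le_0_compat; apply Rmult_le_pos; nra.
Qed.

Lemma bound_large_nonneg p lam b t a : 0 <= bound_large p lam b t a.
Proof.
  unfold bound_large. pose proof (Rabs_pos lam).
  pose proof (Rpower_pos b (-2 * p * (1 - a))); pose proof (Rpower_pos b (-4 * p * (1 - a))).
  pose proof (Rpower_pos b (-2 * p)).
  pose proof (exp_pos (- t / p)); pose proof (exp_pos (t / p)).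
  apply Rplus_le_le_0_compat; apply Rmult_le_pos; nra.
Qed.

Lemma enlarge_constant x c C B : 0 <= B -> c <= C -> x <= c * B -> x <= C * B.
Proof. intros HB Hc Hx. eapply Rle_trans; [exact Hx | apply Rmult_le_compat_r; assumption]. Qed.

Theorem mainTheorem4 (p lam : R) (Sigma : R -> R) :
  0 < p < 1 ->
  is_Sigma p Sigma ->
  forall (T a : R), 0 < T -> 0 < a < p / (1 + p) ->
  exists (b0 C : R), 0 < b0 /\ 0 < C /\
    forall (b t : R), b0 <= b ->
      a * p * ln b <= t <= T + a * p * ln b ->
      (p < 1 / 2 ->
         Rabs (gamma_h p lam b Sigma t) <= C * bound_small p lam b t a /\
         Rabs (Derive (gamma_h p lam b Sigma) t) <= C * bound_small p lam b t a) /\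
      (1 / 2 <= p ->
         Rabs (gamma_h p lam b Sigma t) <= C * bound_large p lam b t a /\
         Rabs (Derive (gamma_h p lam b Sigma) t) <= C * bound_large p lam b t a).
Proof.
  intros Hp [HS1 [HS2 [_ HW]]] T a HT Ha.
  assert (Wronskian : forall t, theta_d1 p t * Derive Sigma t - theta_d2 p t * Sigma t = 1)
    by (intros t; rewrite <- Derive_Theta_h, <- Derive2_Theta_h by exact Hp; apply HW).
  destruct (Sigma_and_derivative_growth p Hp Sigma HS1 HS2 Wronskian) as [S [HS HSb]].
  set (C := Rabs (C_small p S T) + Rabs (C_large p S T) + 1).
  pose proof (Rle_abs (C_small p S T)); pose proof (Rle_abs (C_large p S T)).
  pose proof (Rabs_pos (C_small p S T)); pose proof (Rabs_pos (C_large p S T)).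
  exists 1, C. split; [lra | split; [unfold C; lra|]].
  intros b t Hb Ht. split; [intros Hcase | intros _].
  - destruct (gamma_estimate_small p lam Sigma S T Hp HS1 HS (fun t => proj1 (HSb t))
                (fun t => proj2 (HSb t)) HT b a t Hb (proj1 Ha) Ht Hcase) as [Hg Hg'].
    split; (apply (enlarge_constant _ (C_small p S T)); [apply bound_small_nonneg | unfold C; lra | assumption]).
  - destruct (gamma_estimate_large p lam Sigma S T Hp HS1 HS (fun t => proj1 (HSb t))
                (fun t => proj2 (HSb t)) HT b a t Hb (proj1 Ha) Ht) as [Hg Hg'].
    split; (apply (enlarge_constant _ (C_large p S T)); [apply bound_large_nonneg | unfold C; lra | assumption]).
Qed.
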